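(* Let $R$ be an irreducible root system spanning a rational vector space $L$. Then for every nonzero linear function $l\in L^*$ there is a Weyl chamber $C\subset L$ of $R$ such that $\overline C\subset l^+$ and $\overline C\cap l^0=\{0\}$, where $l^+=\{x\in L\mid l(x)\geqslant0\}$, $l^0=\{x\in L\mid l(x)=0\}$ and $\overline C$ is the closure of $C$ in $L$. *)

(* L = Q^n realised as row vectors 'rV[rat]_n,
   linear functions L* as column vectors 'cV[rat]_n. *)
From mathcomp Require Import all_boot all_order all_algebra.
Set Implicit Arguments. Unset Strict Implicit. Unset Printing Implicit Defensive.
Import Order.TTheory GRing.Theory Num.Theory.
Local Open Scope ring_scope.

Definition ev (n : nat) (f : 'cV[rat]_n) (x : 'rV[rat]_n) : rat := (x *m f) 0 0.

Definition refl (n : nat) (cor : 'rV[rat]_n -> 'cV[rat]_n) (a x : 'rV[rat]_n) :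
  'rV[rat]_n := x - (ev (cor a) x) *: a.

(* Bourbaki-style root system R in L with coroot map cor (a |-> a^vee):
   R finite (a seq), spans L, 0 notin R, a^vee(a) = 2, s_a(R) = R,
   a^vee(b) integral. *)
Definition root_system (n : nat) (R : seq 'rV[rat]_n)
  (cor : 'rV[rat]_n -> 'cV[rat]_n) : Prop :=
  [/\ row_full (\matrix_(i < size R) nth 0 R i),
      0 \notin R,
      (forall a, a \in R -> ev (cor a) a = 2),
      (forall a b, a \in R -> b \in R -> refl cor a b \in R) &
      (forall a b, a \in R -> b \in R -> ev (cor a) b \is a Num.int)].

Definition irreducible_rs (n : nat) (R : seq 'rV[rat]_n)
  (cor : 'rV[rat]_n -> 'cV[rat]_n) : Prop :=
  ~ exists P : pred 'rV[rat]_n,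
      [/\ has P R, has (predC P) R &
          forall a b, a \in R -> b \in R -> P a -> ~~ P b -> ev (cor a) b = 0].

Definition regular (n : nat) (R : seq 'rV[rat]_n)
  (cor : 'rV[rat]_n -> 'cV[rat]_n) (x0 : 'rV[rat]_n) : Prop :=
  forall a, a \in R -> ev (cor a) x0 != 0.

(* Weyl chamber: a nonempty region of the complement of the root
   hyperplanes on which every a^vee has constant sign, i.e. the chamber
   containing some regular x0 *)
Definition weyl_chamber (n : nat) (R : seq 'rV[rat]_n)
  (cor : 'rV[rat]_n -> 'cV[rat]_n) (C : 'rV[rat]_n -> Prop) : Prop :=
  exists x0, regular R cor x0 /\
    forall x, C x <-> (forall a, a \in R -> 0 < ev (cor a) x * ev (cor a) x0).

Definition closure_L (n : nat) (C : 'rV[rat]_n -> Prop) (x : 'rV[rat]_n) : Prop :=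
  forall e : rat, 0 < e -> exists y, C y /\ forall i, `|x 0 i - y 0 i| < e.

From mathcomp Require Import all_boot all_order all_algebra.
From mathcomp Require Import ring lra boolp.
Set Implicit Arguments. Unset Strict Implicit. Unset Printing Implicit Defensive.
Import Order.TTheory GRing.Theory Num.Theory.
Local Open Scope ring_scope.

(* Write B(x, y) = sum_(a in R) a^v(x) a^v(y).  The coroots separate the points
   of L (by the W-invariant form on L* built from the roots), so B is positive
   definite and l = B(x, -) for some x <> 0.  Take a regular x0 so close to x
   that x lies in the closed chamber of x0.  For y in that closed chamber every
   term a^v(x) a^v(y) is >= 0, so l(y) >= 0, and l(y) = 0 forces a^v(y) = 0
   whenever a^v(x) <> 0; irreducibility then propagates this to all coroots,
   whence y = 0. *)

Lemma psumr_seq_eq0P (T : numDomainType) (I : eqType) (r : seq I) (F : I -> T) :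
  (forall i, i \in r -> 0 <= F i) -> \sum_(i <- r) F i = 0 ->
  forall i, i \in r -> F i = 0.
Proof.
move=> F_ge0 /eqP; rewrite big_seq psumr_eq0 => [/allP F0 i ir|]; last exact: F_ge0.
by move/implyP: (F0 i ir) => /(_ ir)/eqP.
Qed.

Lemma sumr_sqr_eq0P (T : realDomainType) (I : eqType) (r : seq I) (F : I -> T) :
  \sum_(i <- r) F i * F i = 0 -> forall i, i \in r -> F i = 0.
Proof.
move=> /psumr_seq_eq0P F0 i ir; apply/eqP; rewrite -[_ == 0]orbb -mulf_eq0.
by rewrite F0 // => j _; exact: sqr_ge0.
Qed.

Lemma sqr_gt0 (T : realDomainType) (x : T) : x != 0 -> 0 < x * x.
Proof. by move=> x_neq0; rewrite lt0r mulf_neq0 //= -expr2 sqr_ge0. Qed.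

Lemma mulr_ge0_sign (T : realDomainType) (a b c : T) :
  b != 0 -> 0 <= a * b -> 0 <= c * b -> 0 <= a * c.
Proof. by move=> /sqr_gt0; nra. Qed.

Section LinearForms.
Variable n : nat.
Implicit Types (f g : 'cV[rat]_n) (x y : 'rV[rat]_n).

Lemma evE f x : ev f x = \sum_i x 0 i * f i 0.
Proof. by rewrite /ev mxE. Qed.

Lemma evD f x y : ev f (x + y) = ev f x + ev f y.
Proof. by rewrite /ev mulmxDl mxE. Qed.

Lemma evZ f k x : ev f (k *: x) = k * ev f x.
Proof. by rewrite /ev -scalemxAl mxE. Qed.

Lemma ev0 f : ev f 0 = 0.
Proof. by rewrite /ev mul0mx mxE. Qed.

Lemma evB f x y : ev f (x - y) = ev f x - ev f y.
Proof. by rewrite evD -scaleN1r evZ mulN1r. Qed.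

Lemma ev_sum (I : Type) (r : seq I) (F : I -> 'rV[rat]_n) f :
  ev f (\sum_(i <- r) F i) = \sum_(i <- r) ev f (F i).
Proof. exact: (big_morph (ev f) (evD f) (ev0 f)). Qed.

Lemma evfD f g x : ev (f + g) x = ev f x + ev g x.
Proof. by rewrite /ev mulmxDr mxE. Qed.

Lemma evfZ k f x : ev (k *: f) x = k * ev f x.
Proof. by rewrite /ev -scalemxAr mxE. Qed.

Lemma evf0 x : ev 0 x = 0.
Proof. by rewrite /ev mulmx0 mxE. Qed.

Lemma evfB f g x : ev (f - g) x = ev f x - ev g x.
Proof. by rewrite evfD -scaleN1r evfZ mulN1r. Qed.

Lemma evf_sum (I : Type) (r : seq I) (F : I -> 'cV[rat]_n) x :
  ev (\sum_(i <- r) F i) x = \sum_(i <- r) ev (F i) x.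
Proof. exact: (big_morph (fun f => ev f x) (fun f g => evfD f g x) (evf0 x)). Qed.

Lemma ev_trmx x y : ev x^T y = ev y^T x.
Proof. by rewrite /ev -[y *m _]trmxK trmx_mul trmxK mxE. Qed.

Lemma ev_delta x i : ev (delta_mx i 0) x = x 0 i.
Proof.
rewrite evE (bigD1 i) //= mxE !eqxx mulr1 big1 ?addr0 // => j ji.
by rewrite mxE (negbTE ji) mulr0.
Qed.

Lemma evf_delta f i : ev f (delta_mx 0 i) = f i 0.
Proof.
rewrite -[f in LHS]trmxK ev_trmx trmx_delta ev_delta mxE.
by congr (f _ _); apply: val_inj.
Qed.

Lemma ev_inj x y : (forall f, ev f x = ev f y) -> x = y.
Proof. by move=> xy; apply/rowP => i; rewrite -!ev_delta. Qed.

Lemma evf_inj f g : (forall x, ev f x = ev g x) -> f = g.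
Proof. by move=> fg; apply/colP => i; rewrite -!evf_delta. Qed.

Lemma ev_dist f x y e : (forall i, `|x 0 i - y 0 i| < e) ->
  `|ev f x - ev f y| <= e * \sum_i `|f i 0|.
Proof.
move=> xy; rewrite -evB evE mulr_sumr; apply: le_trans (ler_norm_sum _ _ _) _.
by apply: ler_sum => i _; rewrite normrM !mxE ler_wpM2r // ltW.
Qed.

Lemma closure_ev_ge0 (C : 'rV[rat]_n -> Prop) f :
  (forall y, C y -> 0 < ev f y) -> forall x, closure_L C x -> 0 <= ev f x.
Proof.
move=> Cf x Cx; rewrite leNgt; apply/negP => fx.
pose K := \sum_i `|f i 0|; have K_ge0 : 0 <= K by exact: sumr_ge0.
pose e := - ev f x / (1 + K).
have e_gt0 : 0 < e by rewrite divr_gt0 ?oppr_gt0 //; lra.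
have eK : e * (1 + K) = - ev f x by rewrite mulfVK //; apply: lt0r_neq0; lra.
have [y [Cy /(ev_dist f)]] := Cx e e_gt0; rewrite -/K => fxy.
have := Cf y Cy; have := ler_norm (ev f y - ev f x); rewrite distrC; nra.
Qed.

Lemma closure_cone0 (C : 'rV[rat]_n -> Prop) x :
  (forall t, 0 < t -> C (t *: x)) -> closure_L C 0.
Proof.
move=> Cx e e_gt0; pose K := \sum_i `|x 0 i|; have K_ge0 : 0 <= K by exact: sumr_ge0.
pose t := e / (1 + K).
have t_gt0 : 0 < t by rewrite divr_gt0 //; lra.
have tK : t * (1 + K) = e by rewrite mulfVK //; apply: lt0r_neq0; lra.
exists (t *: x); split => [|i]; first exact: Cx.
have : `|x 0 i| <= K by rewrite /K (bigD1 i) //= lerDl sumr_ge0.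
rewrite !mxE sub0r normrN normrM (gtr0_norm t_gt0); nra.
Qed.

Definition moment_poly f : {poly rat} := \sum_(i < n) f i 0 *: 'X^i.

Lemma horner_moment_poly f s : (moment_poly f).[s] = ev f (\row_i s ^+ i).
Proof.
rewrite horner_sum evE; apply: eq_bigr => i _.
by rewrite hornerZ hornerXn mxE mulrC.
Qed.

Lemma coef_moment_poly f (i : 'I_n) : (moment_poly f)`_i = f i 0.
Proof.
rewrite coef_sum (bigD1 i) //= coefZ coefXn eqxx mulr1 big1 ?addr0 // => j ji.
by rewrite coefZ coefXn eq_sym (inj_eq val_inj) (negbTE ji) mulr0.
Qed.

Lemma moment_poly_eq0 f : (moment_poly f == 0) = (f == 0).
Proof.
apply/eqP/eqP => [f0|->].
  by apply/colP => i; rewrite -coef_moment_poly f0 coef0 mxE.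
by rewrite /moment_poly big1 // => i _; rewrite mxE scale0r.
Qed.

(* Along the moment curve [s |-> (s ^+ i)_i] each [f] is a nonzero polynomial
   in [s], and a nonzero polynomial has finitely many roots. *)
Lemma exists_regular (fs : seq 'cV[rat]_n) :
  (forall f, f \in fs -> f != 0) -> exists z, forall f, f \in fs -> ev f z != 0.
Proof.
move=> fs_neq0; pose p := \prod_(f <- fs) moment_poly f.
have p_neq0 : p != 0.
  by rewrite prodf_seq_neq0; apply/allP => f /fs_neq0; rewrite moment_poly_eq0.
pose ss := [seq k%:R : rat | k <- iota 0 (size p)].
have ss_uniq : uniq ss.
  by rewrite map_inj_uniq ?iota_uniq // => a b /eqP; rewrite eqr_nat => /eqP.
have : ~~ all (root p) ss.
  apply/negP => /(max_poly_roots p_neq0)/(_ ss_uniq).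
  by rewrite size_map size_iota ltnn.
case/allPn => s _; rewrite /root /p horner_prod prodf_seq_neq0 => /allP ps.
by exists (\row_i s ^+ i) => f /ps; rewrite horner_moment_poly.
Qed.

Lemma exists_regular_near (fs : seq 'cV[rat]_n) x :
  (forall f, f \in fs -> f != 0) ->
  exists x0, forall f, f \in fs -> ev f x0 != 0 /\ 0 <= ev f x * ev f x0.
Proof.
move=> /exists_regular [z z_reg].
pose S := \sum_(f <- fs) `|ev f z| / `|ev f x|.
exists ((1 + S) *: x + z) => f ffs; rewrite evD evZ.
have [fx0|fx_neq0] := eqVneq (ev f x) 0.
  by rewrite fx0 mulr0 add0r mul0r z_reg.
have fx_gt0 : 0 < `|ev f x| by rewrite normr_gt0.
have fzS : `|ev f z| <= S * `|ev f x|.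
  rewrite -ler_pdivrMr // /S (big_rem f) //= lerDl.
  by apply: sumr_ge0 => g _; rewrite divr_ge0.
have S_ge0 : 0 <= S by apply: sumr_ge0 => g _; rewrite divr_ge0.
have fxfz : - (ev f x * ev f z) <= `|ev f x| * `|ev f z|.
  by rewrite -normrM -normrN ler_norm.
have fx2 : ev f x * ev f x = `|ev f x| * `|ev f x|.
  by rewrite -normrM ger0_norm // sqr_ge0.
have : 0 < ev f x * ((1 + S) * ev f x + ev f z) by nra.
by move=> pos; split; [apply: contraTneq pos => ->; rewrite mulr0 ltxx | exact: ltW].
Qed.

Lemma exists_sum_sqr_rep (fs : seq 'cV[rat]_n) l :
  (forall v, (forall f, f \in fs -> ev f v = 0) -> v = 0) ->
  exists x, forall z, ev l z = \sum_(f <- fs) ev f x * ev f z.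
Proof.
move=> fs_sep; pose M := \sum_(f <- fs) f *m f^T.
have evM v z : ev z^T (v *m M) = \sum_(f <- fs) ev f v * ev f z.
  rewrite /M mulmx_sumr ev_sum; apply: eq_bigr => f _.
  by rewrite mulmxA [v *m f]mx11_scalar mul_scalar_mx evZ ev_trmx trmxK.
have M_unit : M \in unitmx.
  rewrite -row_free_unit; apply: inj_row_free => v vM0; apply: fs_sep.
  by apply: sumr_sqr_eq0P; rewrite -evM vM0 ev0.
exists (l^T *m invmx M) => z; by rewrite -evM mulmxKV // ev_trmx trmxK.
Qed.

End LinearForms.

Lemma progression_notin n (R : seq 'rV[rat]_n) y c :
  c != 0 -> ~ (forall k : nat, y + k%:R *: c \in R).
Proof.
move=> c_neq0 yR; pose ys := [seq y + k%:R *: c | k <- iota 0 (size R).+1].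
have ys_uniq : uniq ys.
  rewrite map_inj_uniq ?iota_uniq // => k1 k2 /addrI /eqP.
  by rewrite -subr_eq0 -scalerBl scaler_eq0 (negbTE c_neq0) orbF subr_eq0 eqr_nat => /eqP.
have ys_sub : {subset ys <= undup R} by move=> _ /mapP [k _ ->]; rewrite mem_undup.
have := leq_trans (uniq_leq_size ys_uniq ys_sub) (size_undup R).
by rewrite size_map size_iota ltnn.
Qed.

Section RootSystem.
Variables (n : nat) (R : seq 'rV[rat]_n) (cor : 'rV[rat]_n -> 'cV[rat]_n).
Hypothesis HR : root_system R cor.
Local Notation s := (refl cor).

Lemma coroot_root a : a \in R -> ev (cor a) a = 2.
Proof. by case: HR => _ _ H _ _; apply: H. Qed.

Lemma refl_root a b : a \in R -> b \in R -> s a b \in R.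
Proof. by case: HR => _ _ _ H _; apply: H. Qed.

Lemma root_neq0 a : a \in R -> a != 0.
Proof. by case: HR => _ R0 _ _ _; apply: contraTneq => ->. Qed.

Lemma coroot_neq0 a : a \in R -> cor a != 0.
Proof. by move=> aR; apply/eqP => a0; have := coroot_root aR; rewrite a0 evf0. Qed.

Lemma roots_span y : exists u : 'rV_(size R), y = \sum_i u 0 i *: R`_i.
Proof.
case: HR => R_full _ _ _ _; have /submxP [u ->] := submx_full y R_full.
by exists u; rewrite mulmx_sum_row; apply: eq_bigr => i _; rewrite rowK.
Qed.

Lemma evf_roots_inj f g : (forall a, a \in R -> ev f a = ev g a) -> f = g.
Proof.
move=> fg; apply: evf_inj => y; have [u ->] := roots_span y.
by rewrite !ev_sum; apply: eq_bigr => i _; rewrite !evZ fg // mem_nth.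
Qed.

Lemma ev_refl f a x : ev f (s a x) = ev f x - ev (cor a) x * ev f a.
Proof. by rewrite /refl evB evZ. Qed.

Lemma reflK a : a \in R -> involutive (s a).
Proof.
move=> aR x; rewrite {1}/refl ev_refl coroot_root // /refl.
apply/rowP => i; rewrite !mxE; ring.
Qed.

Lemma perm_refl_undup a : a \in R -> perm_eq [seq s a c | c <- undup R] (undup R).
Proof.
move=> aR; have s_uniq : uniq [seq s a c | c <- undup R].
  by rewrite map_inj_uniq ?undup_uniq //; exact: inv_inj (reflK aR).
have s_sub : {subset [seq s a c | c <- undup R] <= undup R}.
  by move=> y /mapP [c]; rewrite !mem_undup => cR ->; exact: refl_root.
have [_ s_eq] := uniq_min_size s_uniq s_sub (eq_leq (esym (size_map _ _))).
exact: uniq_perm s_uniq (undup_uniq R) s_eq.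
Qed.

(* Otherwise [R] would contain the progression [y + k (g - c^v)(y) c]. *)
Lemma coroot_uniq c g : c \in R -> ev g c = 2 ->
  (forall y, y \in R -> y - ev g y *: c \in R) -> g = cor c.
Proof.
move=> cR gc g_refl; apply: evf_roots_inj => y yR; apply/eqP; rewrite -subr_eq0.
pose h z := ev g z - ev (cor c) z.
have h_shift w k : h (w + k *: c) = h w.
  by rewrite /h !evD !evZ gc coroot_root //; ring.
have step w : w \in R -> w + h w *: c \in R.
  move=> wR; have := refl_root cR (g_refl w wR); congr (_ \in R).
  rewrite /refl evB evZ coroot_root //; apply/rowP => i; rewrite !mxE /h; ring.
have line k : y + (k%:R * h y) *: c \in R.
  elim: k => [|k IH]; first by rewrite mul0r scale0r addr0.
  have := step _ IH; rewrite h_shift -addrA -scalerDl.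
  by rewrite -natr1 mulrDl mul1r.
apply/negPn/negP => hy_neq0; apply: (@progression_notin _ R y (h y *: c)).
  by rewrite scaler_eq0 negb_or hy_neq0 root_neq0.
by move=> k; rewrite scalerA.
Qed.

Lemma coroot_refl a b : a \in R -> b \in R ->
  cor (s a b) = cor b - ev (cor b) a *: cor a.
Proof.
move=> aR bR; symmetry; apply: coroot_uniq; first exact: refl_root.
  by rewrite evfB evfZ !ev_refl !coroot_root //; ring.
move=> y yR; have := refl_root aR (refl_root bR (refl_root aR yR)).
congr (_ \in R); rewrite evfB evfZ /refl !(evB, evZ) !coroot_root //.
by apply/rowP => i; rewrite !mxE; ring.
Qed.

Definition dual_form (p q : 'cV[rat]_n) := \sum_(c <- undup R) ev p c * ev q c.

Lemma dual_formC p q : dual_form p q = dual_form q p.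
Proof. by apply: eq_bigr => c _; rewrite mulrC. Qed.

Lemma dual_form_sumr (I : Type) (r : seq I) (k : I -> rat) (q : I -> 'cV[rat]_n) p :
  dual_form p (\sum_(i <- r) k i *: q i) = \sum_(i <- r) k i * dual_form p (q i).
Proof.
rewrite /dual_form; under eq_bigr do rewrite evf_sum mulr_sumr.
rewrite exchange_big; apply: eq_bigr => i _; rewrite mulr_sumr.
by apply: eq_bigr => c _; rewrite evfZ; ring.
Qed.

Lemma dual_form_eq0 p : dual_form p p = 0 -> p = 0.
Proof.
move=> /sumr_sqr_eq0P p0; apply: evf_roots_inj => a aR.
by rewrite evf0 p0 // mem_undup.
Qed.

(* Reindex the defining sum of [dual_form p (cor a)] by the permutation [s a]
   of the roots. *)
Lemma dual_form_coroot a p : a \in R ->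
  2 * dual_form p (cor a) = ev p a * dual_form (cor a) (cor a).
Proof.
move=> aR.
have reindex :
    \sum_(c <- undup R) ev p (s a c) * ev (cor a) (s a c) = dual_form p (cor a).
  by rewrite /dual_form -[RHS](perm_big _ (perm_refl_undup aR)) big_map.
have : \sum_(c <- undup R)
      (ev p a * (ev (cor a) c * ev (cor a) c) - ev p c * ev (cor a) c)
    = dual_form p (cor a).
  by rewrite -reindex; apply: eq_bigr => c _; rewrite !ev_refl coroot_root //; ring.
rewrite sumrB -mulr_sumr -/(dual_form (cor a) (cor a)) -/(dual_form p (cor a)).
lra.
Qed.

Lemma dual_form_coroot_gt0 a : a \in R -> 0 < dual_form (cor a) (cor a).
Proof.
move=> aR; rewrite lt_def sumr_ge0 ?andbT => [|c _]; last exact: sqr_ge0.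
by apply: contraNneq (coroot_neq0 aR) => /dual_form_eq0 ->.
Qed.

Lemma coroot_orthoC a b : a \in R -> b \in R -> ev (cor a) b = 0 -> ev (cor b) a = 0.
Proof.
move=> aR bR ab0; have := dual_form_coroot (cor b) aR.
rewrite dual_formC dual_form_coroot // ab0 mul0r => /esym/eqP.
by rewrite mulf_eq0 (gt_eqF (dual_form_coroot_gt0 aR)) orbF => /eqP.
Qed.

Lemma coroots_separate y : (forall c, c \in R -> ev (cor c) y = 0) -> y = 0.
Proof.
move=> y0; have [u yE] := roots_span y.
pose k i := u 0 i * 2 / dual_form (cor R`_i) (cor R`_i).
pose psi := \sum_(i <- index_enum 'I_(size R)) k i *: cor R`_i.
have ev_psi p : ev p y = dual_form p psi.
  rewrite dual_form_sumr yE ev_sum; apply: eq_bigr => i _.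
  have RiR : R`_i \in R by rewrite mem_nth.
  have d_neq0 := lt0r_neq0 (dual_form_coroot_gt0 RiR).
  rewrite evZ /k -!mulrA; congr (_ * _).
  by rewrite mulrCA dual_form_coroot // mulrC mulfK.
have psi0 : psi = 0.
  apply: dual_form_eq0; rewrite -ev_psi /psi evf_sum big1 // => i _.
  by rewrite evfZ y0 ?mulr0 // mem_nth.
apply: ev_inj => p; rewrite ev_psi psi0 ev0 /dual_form big1 // => c _.
by rewrite evf0 mulr0.
Qed.

Definition annihilated (x z : 'rV[rat]_n) :=
  forall b, b \in R -> ev (cor b) x != 0 -> ev (cor b) z = 0.

Lemma annihilated_coroot x a b : a \in R -> b \in R ->
  ev (cor a) x = 0 -> ev (cor b) x != 0 -> ev (cor b) a != 0 ->
  forall z, annihilated x z -> ev (cor a) z = 0.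
Proof.
move=> aR bR ax bx ba z xz.
have sab_x : ev (cor (s a b)) x != 0 by rewrite coroot_refl // evfB evfZ ax mulr0 subr0.
have := xz _ (refl_root aR bR) sab_x.
rewrite coroot_refl // evfB evfZ (xz b bR bx) sub0r => /eqP.
by rewrite oppr_eq0 mulf_eq0 (negbTE ba) => /eqP.
Qed.

(* The roots whose coroot vanishes on every [z] annihilated by [x] are
   orthogonal to the other roots, and they include every root whose coroot
   does not kill [x]; by irreducibility they exhaust [R]. *)
Lemma annihilated_eq0 x y : irreducible_rs R cor -> x != 0 ->
  annihilated x y -> y = 0.
Proof.
move=> R_irr x_neq0 xy.
pose Q c := `[< forall z, annihilated x z -> ev (cor c) z = 0 >].
have [/allP allQ|/allPn [c cR nQc]] := boolP (all Q R).
  by apply: coroots_separate => c /allQ /asboolP; apply.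
exfalso; apply: R_irr; exists (predC Q); split.
- by apply/hasP; exists c.
- have /hasP [b bR bx] : has (fun b => ev (cor b) x != 0) R.
    apply: contraTT x_neq0 => /hasPn x0; rewrite negbK; apply/eqP/coroots_separate.
    by move=> d /x0; rewrite negbK => /eqP.
  by apply/hasP; exists b => //=; rewrite negbK; apply/asboolP => z /(_ b bR bx).
- move=> a b aR bR /= nQa; rewrite negbK => /asboolP Qb.
  have ax : ev (cor a) x = 0.
    by apply/eqP; apply: contraNT nQa => ax; apply/asboolP => z; apply.
  have xa : annihilated x a.
    move=> b' b'R b'x; apply/eqP; apply: contraNT nQa => b'a.
    by apply/asboolP; exact: annihilated_coroot ax b'x b'a.
  by apply: coroot_orthoC => //; exact: Qb.
Qed.

Lemma exists_coroot_sum_rep l : l != 0 -> exists2 x, x != 0 &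
  forall z, ev l z = \sum_(c <- R) ev (cor c) x * ev (cor c) z.
Proof.
move=> l_neq0; have [|x lE] := @exists_sum_sqr_rep _ (map cor R) l.
  by move=> v v0; apply: coroots_separate => c cR; apply/v0/map_f.
exists x => [|z]; last by rewrite lE big_map.
apply: contraNneq l_neq0 => x0; apply/eqP/evf_inj => z.
by rewrite lE x0 evf0 big1 // => f _; rewrite ev0 mul0r.
Qed.

Definition chamber (x0 y : 'rV[rat]_n) :=
  forall a, a \in R -> 0 < ev (cor a) y * ev (cor a) x0.

Lemma closure_chamber x0 y : closure_L (chamber x0) y ->
  forall a, a \in R -> 0 <= ev (cor a) y * ev (cor a) x0.
Proof.
move=> Cy a aR; rewrite mulrC -evfZ; apply: closure_ev_ge0 Cy => z /(_ a aR).
by rewrite evfZ mulrC.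
Qed.

Lemma closure_chamber0 x0 : regular R cor x0 -> closure_L (chamber x0) 0.
Proof.
move=> x0_reg; apply: closure_cone0 => t t_gt0 a aR.
by rewrite evZ -mulrA; apply: mulr_gt0 => //; exact/sqr_gt0/x0_reg.
Qed.

Lemma exists_regular_near_coroots x : exists2 x0, regular R cor x0 &
  forall a, a \in R -> 0 <= ev (cor a) x * ev (cor a) x0.
Proof.
have [|x0 x0_near] := @exists_regular_near _ (map cor R) x.
  by move=> _ /mapP [a aR ->]; exact: coroot_neq0.
by exists x0 => a aR; have [] := x0_near _ (map_f cor aR).
Qed.

End RootSystem.

Theorem lemma4 (n : nat) (R : seq 'rV[rat]_n) (cor : 'rV[rat]_n -> 'cV[rat]_n)
  (HR : root_system R cor) (Hirr : irreducible_rs R cor)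
  (l : 'cV[rat]_n) (hl : l != 0) :
  exists C : 'rV[rat]_n -> Prop,
    [/\ weyl_chamber R cor C,
        (forall x, closure_L C x -> 0 <= ev l x) &
        (forall x, closure_L C x /\ ev l x = 0 <-> x = 0)].
Proof.
have [x x_neq0 lE] := exists_coroot_sum_rep HR hl.
have [x0 x0_reg x_near] := exists_regular_near_coroots HR x.
have terms_ge0 y : closure_L (chamber R cor x0) y ->
    forall a, a \in R -> 0 <= ev (cor a) x * ev (cor a) y.
  move=> /closure_chamber y_near a aR.
  exact: mulr_ge0_sign (x0_reg a aR) (x_near a aR) (y_near a aR).
exists (chamber R cor x0); split => [|y /terms_ge0 y_ge0|y].
- by exists x0.
- by rewrite lE big_seq sumr_ge0.
split => [[/terms_ge0 y_ge0 ly0]|->]; last first.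
  by split; [exact: closure_chamber0 | exact: ev0].
apply: (annihilated_eq0 HR Hirr x_neq0) => b bR bx; move: ly0.
rewrite lE => /(psumr_seq_eq0P y_ge0) /(_ b bR) /eqP.
by rewrite mulf_eq0 (negbTE bx) => /eqP.
Qed.
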